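(* Let $y\in\{1,\dots,C\}^N$ be node labels with exactly $K=N/C$ nodes in each class, and let $\mathcal G_r=(\mathcal V,\mathcal E_r)$, $r=1,\dots,R$, be independent random undirected graphs on the common node set $\mathcal V=\{1,\dots,N\}$, with $\mathcal N_r(i)=\{j:(i,j)\in\mathcal E_r\}$. Assume that in each graph $\mathcal G_r$ the events $\{(i,j)\in\mathcal E_r\}$ are independent across unordered node pairs $\{i,j\}$, and that $\mathbb P[(i,j)\in\mathcal E_r]\le q$ whenever $y_i\neq y_j$. Then $$\mathbb P\Big[\bigcap_{i=1}^N\bigcup_{r=1}^R\{y_j=y_i\ \text{for all } j\in\mathcal N_r(i)\}\Big]\ \ge\ \Big(1-\Big(1-(1-q)^{\frac{N(C-1)}{C}}\Big)^R\Big)^N.$$ *)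

From mathcomp Require Import all_boot all_order all_algebra.
Set Implicit Arguments. Unset Strict Implicit. Unset Printing Implicit Defensive.
Import Order.TTheory GRing.Theory Num.Theory.
Local Open Scope ring_scope.

(* unordered node pairs {i,j}, i <> j, represented as (i,j) with i < j *)
Definition upair (N : nat) := {p : 'I_N * 'I_N | (p.1 < p.2)%N}.

(* an outcome: for each graph r and each unordered pair, whether the edge is present *)
Definition outcome (R N : nat) := {ffun 'I_R * upair N -> bool}.

Definition adj (R N : nat) (w : outcome R N) (r : 'I_R) (i j : 'I_N) : bool :=
  match insub (i, j) : option (upair N) with
  | Some e => w (r, e)
  | None => match insub (j, i) : option (upair N) with
            | Some e => w (r, e)
            | None => false
            end
  end.

(* probability of an outcome when every edge indicator (r,{i,j}) is an independent
   Bernoulli variable of parameter p (r, {i,j}) *)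
Definition weight (F : ringType) (R N : nat) (p : 'I_R * upair N -> F)
  (w : outcome R N) : F :=
  \prod_(x : 'I_R * upair N) (if w x then p x else 1 - p x).

Definition Prob (F : ringType) (R N : nat) (p : 'I_R * upair N -> F)
  (A : pred (outcome R N)) : F :=
  \sum_(w : outcome R N | A w) weight p w.

Definition homophilous_event (R N C : nat) (y : 'I_N -> 'I_C) : pred (outcome R N) :=
  fun w => [forall i : 'I_N, [exists r : 'I_R,
             [forall j : 'I_N, adj w r i j ==> (y j == y i)]]].

From mathcomp Require Import all_boot all_order all_algebra.
From mathcomp Require Import lra zify.
Set Implicit Arguments. Unset Strict Implicit. Unset Printing Implicit Defensive.
Import Order.TTheory GRing.Theory Num.Theory.
Local Open Scope ring_scope.

(* The events "every neighbour of i in graph r has the class of i" and their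
   unions over r are decreasing in the edge set, so by the Harris inequality
   for product measures the probability of their intersection over the nodes
   is at least the product of their probabilities.  For a fixed node i, the
   complements of the events for different graphs depend on disjoint sets of
   edges; reversing the order on the edges of all graphs but r makes the
   complement for r increasing and all the others decreasing, and the Harris
   inequality then bounds the probability of the intersection of the
   complements by the product of their probabilities.  Finally the event for
   one graph is the intersection of N(C-1)/C decreasing events "no edge from i
   to a given node of another class", each of probability at least 1 - q. *)

Lemma finset_ind (T : finType) (P : {set T} -> Prop) :
  P set0 -> (forall (x : T) (S : {set T}), x \notin S -> P S -> P (x |: S)) ->
  forall S, P S.
Proof.
move=> P0 PU S; elim: {S}#|S| {-2}S (erefl #|S|) => [|n IH] S hS.
  by move/eqP: hS; rewrite cards_eq0 => /eqP->.
have /set0Pn[x xS]: S != set0 by rewrite -card_gt0 hS.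
rewrite -(setD1K xS); apply: PU; first by rewrite !inE eqxx.
by apply: IH; move: hS; rewrite (cardsD1 x) xS add1n => -[].
Qed.

Lemma natr_implyb (F : numDomainType) (a b : bool) : a ==> b -> (a%:R : F) <= b%:R.
Proof. by case: a; case: b. Qed.

Lemma natr_forall (F : numDomainType) (J : finType) (P : pred J) :
  ([forall j, P j]%:R : F) = \prod_j (P j)%:R.
Proof.
have [/forallP allP | ] := boolP [forall j, P j].
  by rewrite big1 // => j _; rewrite allP.
by rewrite negb_forall => /existsP[j /negbTE Pj]; rewrite (bigD1 j) //= Pj mul0r.
Qed.

Lemma natr_negb (F : numDomainType) (b : bool) : ((~~ b)%:R : F) = 1 - b%:R.
Proof. by case: b; rewrite /= ?subrr ?subr0. Qed.

Lemma natr_exists (F : numDomainType) (J : finType) (P : pred J) :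
  ([exists j, P j]%:R : F) = 1 - \prod_j (1 - (P j)%:R).
Proof.
rewrite -[[exists j, P j]]negbK negb_exists natr_negb natr_forall.
by congr (_ - _); apply: eq_bigr => j _; rewrite natr_negb.
Qed.

Section ProductMeasure.
Variables (F : realFieldType) (I : finType) (p : I -> F).
Hypothesis p01 : forall x, 0 <= p x <= 1.

Local Notation cfg := {ffun I -> bool}.
Implicit Types (S : {set I}) (v w : cfg) (f g : cfg -> F) (x : I) (b : bool).

Definition pmass (x : I) (b : bool) : F := if b then p x else 1 - p x.

Definition agree_off (S : {set I}) (v w : cfg) : bool :=
  [forall z, (z \notin S) ==> (v z == w z)].

(* Expectation of f under the product measure on the coordinates in S, the
   coordinates outside S being frozen to their values in w. *)
Definition pexp (S : {set I}) (f : cfg -> F) (w : cfg) : F :=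
  \sum_(v | agree_off S v w) (\prod_(z in S) pmass z (v z)) * f v.

Definition upd (w : cfg) (x : I) (b : bool) : cfg :=
  [ffun z => if z == x then b else w z].

Lemma pmass_ge0 x b : 0 <= pmass x b.
Proof. by have /andP[] := p01 x; rewrite /pmass; case: b; rewrite ?subr_ge0. Qed.

Lemma pexp0 f w : pexp set0 f w = f w.
Proof.
rewrite /pexp (big_pred1 w) ?big_set0 ?mul1r // => v /=.
apply/forallP/eqP => [agr|->]; last by move=> z; rewrite eqxx implybT.
by apply/ffunP => z; move: (agr z); rewrite in_set0 => /eqP.
Qed.

Lemma agree_off_upd S v w x b : x \notin S ->
  agree_off S v (upd w x b) = agree_off (x |: S) v w && (v x == b).
Proof.
move=> xS; apply/forallP/andP => [agr | [/forallP agr /eqP vx] z].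
  split; last by move: (agr x); rewrite xS ffunE eqxx.
  apply/forallP => z; apply/implyP; rewrite !inE negb_or => /andP[zx zS].
  by move: (agr z); rewrite zS ffunE (negbTE zx).
apply/implyP => zS; rewrite ffunE; have [->|zx] := eqVneq z x; first by rewrite vx.
by move: (agr z); rewrite !inE negb_or zx zS.
Qed.

Lemma agree_off_upd_at S v w x b : x \notin S -> agree_off S v (upd w x b) -> v x = b.
Proof. by move=> xS; rewrite agree_off_upd // => /andP[_ /eqP]. Qed.

Lemma pexpU1 f S x w : x \notin S ->
  pexp (x |: S) f w = p x * pexp S f (upd w x true) + (1 - p x) * pexp S f (upd w x false).
Proof.
move=> xS; rewrite /pexp (bigID (fun v : cfg => v x)) /= !mulr_sumr.
congr (_ + _); apply: eq_big => v.
- by rewrite agree_off_upd // eqb_id.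
- by move=> /andP[_ vx]; rewrite big_setU1 //= vx mulrA.
- by rewrite agree_off_upd // eqbF_neg.
- by move=> /andP[_ /negbTE vx]; rewrite big_setU1 //= vx mulrA.
Qed.

Lemma eq_pexp_in S f g w :
  (forall v, agree_off S v w -> f v = g v) -> pexp S f w = pexp S g w.
Proof. by move=> fg; apply: eq_bigr => v /fg ->. Qed.

Lemma eq_pexp S f g w : f =1 g -> pexp S f w = pexp S g w.
Proof. by move=> fg; apply: eq_pexp_in => v _. Qed.

Lemma pexp_ge0 S f w : (forall v, 0 <= f v) -> 0 <= pexp S f w.
Proof.
move=> f_ge0; apply: sumr_ge0 => v _; apply: mulr_ge0 => //.
by apply: prodr_ge0 => z _; apply: pmass_ge0.
Qed.

Lemma pexpN S f w : pexp S (fun v => - f v) w = - pexp S f w.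
Proof. by rewrite /pexp -sumrN; apply: eq_bigr => v _; rewrite mulrN. Qed.

Lemma pexpB S f g w : pexp S (fun v => f v - g v) w = pexp S f w - pexp S g w.
Proof. by rewrite /pexp -sumrB; apply: eq_bigr => v _; rewrite mulrBr. Qed.

Lemma pexp1 S w : pexp S (fun=> 1) w = 1.
Proof.
elim/finset_ind: S w => [|x S xS IH] w; first by rewrite pexp0.
by rewrite pexpU1 // !IH !mulr1 addrC subrK.
Qed.

Lemma pexp1B S f w : pexp S (fun v => 1 - f v) w = 1 - pexp S f w.
Proof. by rewrite pexpB pexp1. Qed.

Lemma pexpT_coord_false x w : pexp setT (fun v => (~~ v x)%:R) w = 1 - p x.
Proof.
have xS : x \notin setT :\ x by rewrite !inE eqxx.
rewrite -(setD1K (in_setT x)) pexpU1 //.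
rewrite (@eq_pexp_in _ _ (fun=> 0)); last by move=> v /agree_off_upd_at ->.
rewrite (@eq_pexp_in _ _ (fun=> 1) (upd w x false)); last by move=> v /agree_off_upd_at ->.
by rewrite pexp1 /pexp big1 ?mulr0 ?add0r ?mulr1 // => v _; rewrite mulr0.
Qed.

Lemma prob_pexpT (A : pred cfg) w :
  \sum_(v | A v) \prod_z pmass z (v z) = pexp setT (fun v => (A v)%:R) w.
Proof.
rewrite /pexp big_mkcond; apply: eq_big => [v | v _].
  by symmetry; apply/forallP => z; rewrite in_setT.
rewrite [X in _ = X * _](eq_bigl xpredT) => [|z]; last by rewrite in_setT.
by case: (A v); rewrite ?mulr1 ?mulr0.
Qed.

Section Orientation.
Variable sigma : I -> bool.

Definition ori_le (v w : cfg) : Prop :=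
  forall z, if sigma z then v z ==> w z else w z ==> v z.

Definition nonincr (f : cfg -> F) : Prop := forall v w, ori_le v w -> f w <= f v.
Definition nondecr (f : cfg -> F) : Prop := forall v w, ori_le v w -> f v <= f w.

Lemma ori_le_upd v w x b : ori_le v w -> ori_le (upd v x b) (upd w x b).
Proof.
move=> vw z; rewrite !ffunE; case: (z == x); last exact: vw.
by case: (sigma z); rewrite implybb.
Qed.

Lemma ori_le_upd_flip w x : if sigma x then ori_le (upd w x false) (upd w x true)
                           else ori_le (upd w x true) (upd w x false).
Proof.
case sx: (sigma x) => z; rewrite !ffunE; case: eqP => [->|_];
  rewrite ?sx //; by case: (sigma z); rewrite implybb.
Qed.

Lemma pexp_nonincr S f : nonincr f -> nonincr (pexp S f).
Proof.
move=> f_dn; elim/finset_ind: S => [|x S xS IH] v w vw; first by rewrite !pexp0; apply: f_dn.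
have /andP[px0 px1] := p01 x.
by rewrite !pexpU1 //; apply: lerD; apply: ler_wpM2l; rewrite ?subr_ge0 //;
  apply: IH; apply: ori_le_upd.
Qed.

(* Induction on S: conditioning on one more coordinate x adds to the gap the
   term p x (1 - p x) (f0 - f1)(g0 - g1), nonnegative since f and g move
   together. *)
Lemma harris S f g : nonincr f -> nonincr g ->
  forall w, pexp S f w * pexp S g w <= pexp S (fun v => f v * g v) w.
Proof.
move=> f_dn g_dn; elim/finset_ind: S => [|x S xS IH] w; first by rewrite !pexp0.
rewrite !pexpU1 //.
have fS_dn := pexp_nonincr S f_dn; have gS_dn := pexp_nonincr S g_dn.
set f1 := pexp S f (upd w x true); set f0 := pexp S f (upd w x false).
set g1 := pexp S g (upd w x true); set g0 := pexp S g (upd w x false).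
have fg_comonotone : 0 <= (f0 - f1) * (g0 - g1).
  have := ori_le_upd_flip w x; case: (sigma x) => le10.
    by apply: mulr_ge0; rewrite subr_ge0; [apply: fS_dn | apply: gS_dn].
  by apply: mulr_le0; rewrite subr_le0; [apply: fS_dn | apply: gS_dn].
have /andP[px0 px1] := p01 x.
have E1 : 0 <= p x * (pexp S (fun v => f v * g v) (upd w x true) - f1 * g1).
  by apply: mulr_ge0; rewrite ?subr_ge0 ?IH.
have E0 : 0 <= (1 - p x) * (pexp S (fun v => f v * g v) (upd w x false) - f0 * g0).
  by apply: mulr_ge0; rewrite ?subr_ge0 ?IH.
have E2 : 0 <= p x * (1 - p x) * ((f0 - f1) * (g0 - g1)).
  by rewrite mulr_ge0 // mulr_ge0 // subr_ge0.
nra.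
Qed.

Lemma harris_mixed S f g : nondecr f -> nonincr g ->
  forall w, pexp S (fun v => f v * g v) w <= pexp S f w * pexp S g w.
Proof.
move=> f_up g_dn w.
have Nf_dn : nonincr (fun v => - f v) by move=> v u vu; rewrite lerN2; apply: f_up.
have := harris S Nf_dn g_dn w.
rewrite (@eq_pexp _ (fun v => - f v * g v) (fun v => - (f v * g v))) => [|v];
  last exact: mulNr.
by rewrite !pexpN mulNr lerN2.
Qed.

Lemma nonincr_prod (J : eqType) (s : seq J) (fs : J -> cfg -> F) :
  (forall j, j \in s -> nonincr (fs j)) -> (forall j v, 0 <= fs j v) ->
  nonincr (fun v => \prod_(j <- s) fs j v).
Proof.
elim: s => [|a s IH] fs_dn fs_ge0 v w vw; first by rewrite !big_nil.
rewrite !big_cons; apply: ler_pM => //; first exact: prodr_ge0.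
- by apply: fs_dn; rewrite ?mem_head.
- by apply: IH => // j js; apply: fs_dn; rewrite inE js orbT.
Qed.

Lemma harris_prod (J : eqType) (s : seq J) (fs : J -> cfg -> F) S w :
  (forall j, nonincr (fs j)) -> (forall j v, 0 <= fs j v) ->
  \prod_(j <- s) pexp S (fs j) w <= pexp S (fun v => \prod_(j <- s) fs j v) w.
Proof.
move=> fs_dn fs_ge0; elim: s => [|a s IH].
  by rewrite big_nil (@eq_pexp _ _ (fun=> 1)) ?pexp1 // => v; rewrite big_nil.
rewrite big_cons (@eq_pexp _ (fun v => \prod_(j <- a :: s) fs j v)
  (fun v => fs a v * \prod_(j <- s) fs j v)) => [|v];
  last by rewrite big_cons.
apply: le_trans (harris S (fs_dn a) _ w); last exact: nonincr_prod.
by apply: ler_wpM2l => //; apply: pexp_ge0.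
Qed.

End Orientation.

(* Typically gs j depends only on a block of coordinates; the orientation
   ori j is chosen so that gs j increases and all the other factors decrease. *)
Lemma harris_mixed_prod (J : eqType) (s : seq J) (ori : J -> I -> bool)
    (gs : J -> cfg -> F) S w :
  uniq s -> (forall j v, 0 <= gs j v) -> (forall j, nondecr (ori j) (gs j)) ->
  (forall j k, j != k -> nonincr (ori j) (gs k)) ->
  pexp S (fun v => \prod_(k <- s) gs k v) w <= \prod_(k <- s) pexp S (gs k) w.
Proof.
move=> + gs_ge0 gs_up gs_dn; elim: s => [|a s IH].
  by rewrite big_nil (@eq_pexp _ _ (fun=> 1)) ?pexp1 // => v; rewrite big_nil.
rewrite cons_uniq => /andP[a_s s_uniq].
rewrite big_cons (@eq_pexp _ (fun v => \prod_(j <- a :: s) gs j v)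
  (fun v => gs a v * \prod_(j <- s) gs j v)) => [|v];
  last by rewrite big_cons.
apply: le_trans (harris_mixed S (gs_up a) _ w) _.
  apply: nonincr_prod => // j js; apply: gs_dn.
  by apply: contraNneq a_s => ->.
by apply: ler_wpM2l; [apply: pexp_ge0 | apply: IH].
Qed.

End ProductMeasure.

Section RandomGraphs.
Variables (F : realFieldType) (N C R : nat) (y : 'I_N -> 'I_C).
Variable p : 'I_R * upair N -> F.
Hypothesis p01 : forall x, 0 <= p x <= 1.
Variable q : F.
Hypothesis q01 : 0 <= q <= 1.
Hypothesis p_hetero : forall (r : 'I_R) (e : upair N),
  y (val e).1 != y (val e).2 -> p (r, e) <= q.

Lemma adj_cases (r : 'I_R) (i j : 'I_N) :
  (exists e : upair N, (val e = (i, j) \/ val e = (j, i)) /\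
     forall w : outcome R N, adj w r i j = w (r, e)) \/
  (forall w : outcome R N, adj w r i j = false).
Proof.
rewrite /adj; case: insubP => [e _ ve | _]; first by left; exists e; split; [left|].
case: insubP => [e _ ve | _]; first by left; exists e; split; [right|].
by right.
Qed.

Lemma adj_le (r : 'I_R) (i j : 'I_N) (v w : outcome R N) :
  (forall z : 'I_R * upair N, z.1 = r -> v z ==> w z) -> adj v r i j ==> adj w r i j.
Proof. by move=> vw; case: (adj_cases r i j) => [[e [_ adj_e]] | no_adj]; rewrite ?adj_e ?no_adj ?vw. Qed.

Definition homophilous_at (i : 'I_N) (r : 'I_R) (w : outcome R N) : bool :=
  [forall j, adj w r i j ==> (y j == y i)].

Definition homophilous_somewhere (i : 'I_N) (w : outcome R N) : bool :=
  [exists r, homophilous_at i r w].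

Lemma homophilous_at_le (i : 'I_N) (r : 'I_R) (v w : outcome R N) :
  (forall z : 'I_R * upair N, z.1 = r -> v z ==> w z) ->
  homophilous_at i r w ==> homophilous_at i r v.
Proof.
move=> vw; apply/implyP => /forallP hw; apply/forallP => j.
by have := hw j; have := adj_le i j vw; do 2 case: adj.
Qed.

Lemma pexpT_homophilous_at (i : 'I_N) (r : 'I_R) (w0 : outcome R N) :
  (1 - q) ^+ #|[set j | y j != y i]| <= pexp p setT (fun v => (homophilous_at i r v)%:R) w0.
Proof.
have /andP[q0 q1] := q01.
rewrite (@eq_pexp _ _ _ _ _ (fun v => \prod_j (adj v r i j ==> (y j == y i))%:R)) => [|v];
  last by rewrite natr_forall.
apply: le_trans (harris_prod p01 (sigma := fun=> true) _ _ _ _ _) => [|j v w vw|j v];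
  last by case: (_ ==> _).
  rewrite -prodr_const big_mkcond /=; apply: ler_prod => j _.
  case: ifP; rewrite inE => hj; apply/andP; split; rewrite ?subr_ge0 ?ler01 //.
    case: (adj_cases r i j) => [[e [ve adj_e]] | no_adj].
      rewrite (@eq_pexp _ _ _ _ _ (fun v => (~~ v (r, e))%:R)) => [|v];
        last by rewrite adj_e (negbTE hj) implybF.
      rewrite pexpT_coord_false lerD2l lerN2; apply: p_hetero.
      by case: ve => ->; rewrite //= eq_sym.
    rewrite (@eq_pexp _ _ _ _ _ (fun=> 1)) => [|v]; last by rewrite no_adj.
    by rewrite pexp1 lerBlDr lerDl.
  rewrite (@eq_pexp _ _ _ _ _ (fun=> 1)) => [|v]; last by rewrite (negbFE hj) implybT.
  by rewrite pexp1.
apply: natr_implyb; have := adj_le (r := r) i j (fun z _ => vw z).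
by case: (adj v r i j); case: (adj w r i j); case: (y j == y i).
Qed.

Lemma pexpT_homophilous_somewhere (i : 'I_N) (w0 : outcome R N) :
  1 - (1 - (1 - q) ^+ #|[set j | y j != y i]|) ^+ R
    <= pexp p setT (fun v => (homophilous_somewhere i v)%:R) w0.
Proof.
rewrite (@eq_pexp _ _ _ _ _ (fun v => 1 - \prod_r (1 - (homophilous_at i r v)%:R))) => [|v];
  last by rewrite natr_exists.
rewrite pexp1B lerD2l lerN2.
have not_hom_ge0 r v : 0 <= 1 - (homophilous_at i r v)%:R :> F.
  by case: homophilous_at; rewrite ?subrr ?subr0.
apply: le_trans (harris_mixed_prod p01 (s := index_enum 'I_R)
   (ori := fun r0 (z : 'I_R * upair N) => z.1 == r0) _ _ _ _ _ _) _.
- exact: index_enum_uniq.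
- exact: not_hom_ge0.
- move=> r0 v w vw; rewrite lerD2l lerN2; apply: natr_implyb.
  by apply: homophilous_at_le => z zr; have := vw z; rewrite zr eqxx.
- move=> r0 k r0k v w vw; rewrite lerD2l lerN2; apply: natr_implyb.
  by apply: homophilous_at_le => z zk; have := vw z; rewrite zk eq_sym (negbTE r0k).
rewrite -iter_mulr_1 -big_const_ord.
apply: ler_prod => r _; rewrite pexp_ge0 //= pexp1B lerD2l lerN2.
exact: pexpT_homophilous_at.
Qed.

End RandomGraphs.

Lemma card_other_classes (N C K : nat) (y : 'I_N -> 'I_C)
  (hK : forall c : 'I_C, #|[set i | y i == c]| = K) (i : 'I_N) :
  #|[set j | y j != y i]| = ((N * (C - 1)) %/ C)%N.
Proof.
have N_CK : N = (C * K)%N.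
  rewrite -{1}(card_ord N) -sum1_card (partition_big y xpredT) //=.
  rewrite (eq_bigr (fun=> K)) => [|c _]; last by rewrite sum1dep_card -(hK c).
  by rewrite sum_nat_const card_ord.
have := cardC [set j | y j == y i]; rewrite hK card_ord.
have -> : #|[predC [set j | y j == y i]]| = #|[set j | y j != y i]|.
  by apply: eq_card => j; rewrite !inE.
move=> cardE; have -> : #|[set j | y j != y i]| = (N - K)%N by lia.
case: C N_CK {y hK i cardE} => [|C] ->; first by rewrite mul0n div0n.
by rewrite -mulnA mulKn //; lia.
Qed.

Unset Implicit Arguments.

Theorem proposition2 (F : realFieldType) (N C K R : nat) (y : 'I_N -> 'I_C)
  (hK : forall c : 'I_C, #|[set i | y i == c]| = K)
  (p : 'I_R * upair N -> F)
  (hp : forall x, 0 <= p x <= 1)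
  (q : F) (hq01 : 0 <= q <= 1)
  (hq : forall (r : 'I_R) (e : upair N),
          y (val e).1 != y (val e).2 -> p (r, e) <= q) :
  Prob p (@homophilous_event R N C y) >=
  (1 - (1 - (1 - q) ^+ ((N * (C - 1)) %/ C)%N) ^+ R) ^+ N.
Proof.
have /andP[q0 q1] := hq01.
have node_bound i : 0 <= 1 - (1 - (1 - q) ^+ ((N * (C - 1)) %/ C)%N) ^+ R
    <= pexp p setT (fun v => (homophilous_somewhere y i v)%:R) [ffun => false].
  rewrite -(card_other_classes hK i) pexpT_homophilous_somewhere // andbT.
  have /andP[pow_ge0 pow_le1] : 0 <= (1 - q) ^+ #|[set j | y j != y i]| <= 1.
    by rewrite exprn_ge0 ?exprn_ile1 // ?subr_ge0 // lerBlDr lerDl.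
  by rewrite subr_ge0 exprn_ile1 // ?subr_ge0 // lerBlDr lerDl.
rewrite /Prob /weight (prob_pexpT p _ [ffun => false]).
rewrite (@eq_pexp _ _ _ _ _ (fun v => \prod_i (homophilous_somewhere y i v)%:R)) => [|v];
  last by rewrite natr_forall.
apply: le_trans (harris_prod hp (sigma := fun=> true) _ _ _ _ _) => [|i v w vw|i v];
  last by case: homophilous_somewhere.
  by rewrite -iter_mulr_1 -big_const_ord; apply: ler_prod => i _; apply: node_bound.
apply: natr_implyb; apply/implyP => /existsP[r hom]; apply/existsP; exists r.
by apply: (implyP (homophilous_at_le _ _ _)) hom => z _; apply: vw.
Qed.
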